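(* Let $\mathcal{X}$ be a finite set and $P_X$ a probability mass function on $\mathcal{X}$ with $P_X(x)>0$ for all $x\in\mathcal{X}$. For every guessing function $G$ on $\mathcal{X}$, every $\rho>0$ and every $q\in\mathbb{R}$, $$ E_q[G(X)^\rho] \;\geq\; (1+\ln|\mathcal{X}|)^{-\rho}\,\frac{\left[\sum_{x\in\mathcal{X}}P_X(x)^{\frac{q}{1+\rho}}\right]^{1+\rho}}{\sum_{x\in\mathcal{X}}P_X(x)^q}. $$
   Context: A guessing function on a finite set $\mathcal{X}$ is a bijection $G:\mathcal{X}\to\{1,2,\dots,|\mathcal{X}|\}$ ($G(x)$ is the number of guesses needed when $X=x$). For $q\in\mathbb{R}$ and a function $F$ on $\mathcal{X}$, the $q$-normalized expectation under $P_X$ is $E_q[F(X)]=\frac{\sum_{x\in\mathcal{X}}F(x)P_X(x)^q}{\sum_{x\in\mathcal{X}}P_X(x)^q}$. *)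

From Stdlib Require Import Reals Lra Lia.
Open Scope R_scope.

(* The finite set X is modelled as {0, ..., n-1}. *)
Fixpoint sumR (n : nat) (f : nat -> R) : R :=
  match n with
  | O => 0
  | S m => sumR m f + f m
  end.

Definition pmf_pos (n : nat) (P : nat -> R) : Prop :=
  (forall x, (x < n)%nat -> 0 < P x) /\ sumR n P = 1.

Definition guessing_function (n : nat) (G : nat -> nat) : Prop :=
  (forall x, (x < n)%nat -> (1 <= G x <= n)%nat) /\
  (forall x y, (x < n)%nat -> (y < n)%nat -> G x = G y -> x = y).

Definition Eq_norm (n : nat) (P : nat -> R) (q : R) (F : nat -> R) : R :=
  sumR n (fun x => F x * Rpower (P x) q) / sumR n (fun x => Rpower (P x) q).

(** The weights [P x ^ (q / (1 + rho))] split as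
    [(G x ^ rho * P x ^ q) ^ (1 / (1 + rho)) * (1 / G x) ^ (rho / (1 + rho))],
    so Hölder's inequality with exponents [1 + rho] and [(1 + rho) / rho] bounds
    [(sum_x P x ^ (q / (1 + rho))) ^ (1 + rho)] by
    [(sum_x G x ^ rho * P x ^ q) * (sum_x 1 / G x) ^ rho].  Since [G] is a bijection
    onto [{1, ..., n}], the last sum is the harmonic number [H_n <= 1 + ln n]. *)

From Stdlib Require Import Reals Lra Lia.
From HB Require Import structures.
From mathcomp Require all_boot zify.
Open Scope R_scope.

Lemma sumR_le n f g :
  (forall x, (x < n)%nat -> f x <= g x) -> sumR n f <= sumR n g.
Proof.
  induction n as [|n IH]; simpl; intros Hfg; [lra|].
  assert (sumR n f <= sumR n g) by (apply IH; intros; apply Hfg; lia).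
  assert (f n <= g n) by (apply Hfg; lia).
  lra.
Qed.

Lemma sumR_ext n f g :
  (forall x, (x < n)%nat -> f x = g x) -> sumR n f = sumR n g.
Proof.
  induction n as [|n IH]; simpl; intros Hfg; [reflexivity|].
  f_equal; [apply IH; intros; apply Hfg | apply Hfg]; lia.
Qed.

Lemma sumR_plus n f g :
  sumR n (fun x => f x + g x) = sumR n f + sumR n g.
Proof. induction n as [|n IH]; simpl; [ring | rewrite IH; ring]. Qed.

Lemma sumR_scal n c f : sumR n (fun x => c * f x) = c * sumR n f.
Proof. induction n as [|n IH]; simpl; [ring | rewrite IH; ring]. Qed.

Lemma sumR_pos n f :
  (0 < n)%nat -> (forall x, (x < n)%nat -> 0 < f x) -> 0 < sumR n f.
Proof.
  induction n as [|n IH]; simpl; intros Hn Hf; [lia|].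
  assert (0 < f n) by (apply Hf; lia).
  destruct n as [|n]; [simpl; lra|].
  assert (0 < sumR (S n) f) by (apply IH; [lia | intros; apply Hf; lia]).
  lra.
Qed.

Lemma exp_ge_tangent m w : exp m * (1 + (w - m)) <= exp w.
Proof.
  replace (exp w) with (exp m * exp (w - m)) by (rewrite <- exp_plus; f_equal; ring).
  apply Rmult_le_compat_l; [left; apply exp_pos | apply exp_ineq1_le].
Qed.

Lemma exp_convex th u v :
  0 <= th <= 1 -> exp (th * u + (1 - th) * v) <= th * exp u + (1 - th) * exp v.
Proof.
  intros Hth. set (m := th * u + (1 - th) * v).
  pose proof (exp_ge_tangent m u). pose proof (exp_ge_tangent m v).
  assert (Hm : th * (exp m * (1 + (u - m))) + (1 - th) * (exp m * (1 + (v - m))) = exp m)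
    by (unfold m; ring).
  nra.
Qed.

Lemma Rpower_weighted_AM_GM a b th :
  0 < a -> 0 < b -> 0 <= th <= 1 ->
  Rpower a th * Rpower b (1 - th) <= th * a + (1 - th) * b.
Proof.
  intros Ha Hb Hth. unfold Rpower. rewrite <- exp_plus.
  rewrite <- (exp_ln a) at 2 by exact Ha. rewrite <- (exp_ln b) at 2 by exact Hb.
  apply exp_convex; exact Hth.
Qed.

Lemma Rpower_div x y z :
  0 < x -> 0 < y -> Rpower (x / y) z = Rpower x z / Rpower y z.
Proof.
  intros Hx Hy. unfold Rpower, Rdiv.
  rewrite ln_mult, ln_Rinv, <- exp_Ropp, <- exp_plus by (auto using Rinv_0_lt_compat).
  f_equal; ring.
Qed.

Lemma holder_sumR n (f g : nat -> R) th :
  (0 < n)%nat -> 0 <= th <= 1 ->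
  (forall x, (x < n)%nat -> 0 < f x) -> (forall x, (x < n)%nat -> 0 < g x) ->
  sumR n (fun x => Rpower (f x) th * Rpower (g x) (1 - th)) <=
  Rpower (sumR n f) th * Rpower (sumR n g) (1 - th).
Proof.
  intros Hn Hth Hf Hg.
  set (F := sumR n f). set (Gs := sumR n g).
  assert (HF : 0 < F) by (apply sumR_pos; assumption).
  assert (HG : 0 < Gs) by (apply sumR_pos; assumption).
  set (K := Rpower F th * Rpower Gs (1 - th)).
  assert (HK : 0 < K) by (apply Rmult_lt_0_compat; apply exp_pos).
  (* Hölder follows by applying weighted AM-GM to the normalised terms f x / F and g x / Gs. *)
  assert (Hpt : forall x, (x < n)%nat ->
    Rpower (f x) th * Rpower (g x) (1 - th) <=
    K * ((th / F) * f x + ((1 - th) / Gs) * g x)).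
  { intros x Hx. pose proof (Hf x Hx). pose proof (Hg x Hx).
    pose proof (Rpower_weighted_AM_GM (f x / F) (g x / Gs) th) as Hamgm.
    rewrite !Rpower_div in Hamgm by assumption.
    apply Rmult_le_reg_l with (/ K); [apply Rinv_0_lt_compat; exact HK|].
    replace (/ K * (K * ((th / F) * f x + ((1 - th) / Gs) * g x)))
      with (th * (f x / F) + (1 - th) * (g x / Gs)) by (field; lra).
    replace (/ K * (Rpower (f x) th * Rpower (g x) (1 - th)))
      with (Rpower (f x) th / Rpower F th * (Rpower (g x) (1 - th) / Rpower Gs (1 - th)))
      by (unfold K; field; split; apply Rgt_not_eq, exp_pos).
    apply Hamgm; auto using Rdiv_lt_0_compat. }
  eapply Rle_trans; [apply sumR_le, Hpt|].
  rewrite sumR_scal, sumR_plus, !sumR_scal.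
  right. fold F Gs. field. lra.
Qed.

Lemma inv_succ_le_ln_diff x : 0 < x -> / (x + 1) <= ln (x + 1) - ln x.
Proof.
  intros Hx.
  pose proof (exp_ineq1_le (ln x - ln (x + 1))) as Hexp.
  unfold Rminus in Hexp. rewrite exp_plus, exp_Ropp, !exp_ln in Hexp by lra.
  replace (x * / (x + 1)) with (1 - / (x + 1)) in Hexp by (field; lra).
  lra.
Qed.

Lemma harmonic_le_1_plus_ln n :
  (1 <= n)%nat -> sumR n (fun k => / INR (S k)) <= 1 + ln (INR n).
Proof.
  induction n as [|n IH]; intros Hn; [lia|].
  destruct n as [|n]; [simpl; rewrite ln_1; lra|].
  change (sumR (S (S n)) (fun k => / INR (S k)))
    with (sumR (S n) (fun k => / INR (S k)) + / INR (S (S n))).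
  assert (Hpos : 0 < INR (S n)) by (apply lt_0_INR; lia).
  pose proof (inv_succ_le_ln_diff (INR (S n)) Hpos).
  rewrite (S_INR (S n)). specialize (IH ltac:(lia)). lra.
Qed.

Lemma Rpower_holder_factor g p rho q :
  0 < g -> 0 < p -> 0 < rho ->
  Rpower (Rpower g rho * Rpower p q) (/ (1 + rho)) * Rpower (/ g) (1 - / (1 + rho)) =
  Rpower p (q / (1 + rho)).
Proof.
  intros Hg Hp Hrho. unfold Rpower.
  rewrite ln_mult, !ln_exp, ln_Rinv, <- exp_plus by (auto using exp_pos).
  f_equal. field. lra.
Qed.

Lemma Rpower_holder_pow a b rho :
  0 < a -> 0 < b -> 0 < rho ->
  Rpower (Rpower a (/ (1 + rho)) * Rpower b (1 - / (1 + rho))) (1 + rho) =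
  a * Rpower b rho.
Proof.
  intros Ha Hb Hrho.
  rewrite <- Rpower_mult_distr, !Rpower_mult by apply exp_pos.
  replace (/ (1 + rho) * (1 + rho)) with 1 by (field; lra).
  replace ((1 - / (1 + rho)) * (1 + rho)) with rho by (field; lra).
  rewrite Rpower_1 by exact Ha. reflexivity.
Qed.

Lemma Rpower_sumR_le_moment_harmonic n (P g : nat -> R) rho q :
  (0 < n)%nat -> 0 < rho ->
  (forall x, (x < n)%nat -> 0 < P x) -> (forall x, (x < n)%nat -> 0 < g x) ->
  Rpower (sumR n (fun x => Rpower (P x) (q / (1 + rho)))) (1 + rho) <=
  sumR n (fun x => Rpower (g x) rho * Rpower (P x) q) *
  Rpower (sumR n (fun x => / g x)) rho.
Proof.
  intros Hn Hrho HP Hg.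
  assert (Hterm : forall x, (x < n)%nat -> 0 < Rpower (g x) rho * Rpower (P x) q)
    by (intros; apply Rmult_lt_0_compat; apply exp_pos).
  assert (Hinv : forall x, (x < n)%nat -> 0 < / g x)
    by (intros; apply Rinv_0_lt_compat; auto).
  rewrite <- Rpower_holder_pow by (try apply sumR_pos; auto).
  apply Rle_Rpower_l; [lra | split; [apply sumR_pos; auto; intros; apply exp_pos|]].
  rewrite (sumR_ext n _ (fun x =>
    Rpower (Rpower (g x) rho * Rpower (P x) q) (/ (1 + rho)) *
    Rpower (/ g x) (1 - / (1 + rho)))) by (intros; symmetry; apply Rpower_holder_factor; auto).
  apply holder_sumR; auto.
  split; [left; apply Rinv_0_lt_compat; lra|].
  rewrite <- Rinv_1; apply Rinv_le_contravar; lra.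
Qed.

(* MathComp's nat notations shadow Stdlib's [lt], used by the definitions, so they stay local. *)
Module Reindexing.
Import all_boot zify.
Open Scope R_scope.

HB.instance Definition Rplus_monoid :=
  Monoid.isComLaw.Build R 0 Rplus (fun a b c => esym (Rplus_assoc a b c)) Rplus_comm Rplus_0_l.

Lemma sumR_big n f : sumR n f = \big[Rplus/0]_(i < n) f (nat_of_ord i).
Proof.
elim: n => [|n IH]; first by rewrite big_ord0.
by rewrite big_ord_recr /= IH.
Qed.

Lemma sumR_guessing_reindex n G (f : nat -> R) : guessing_function n G ->
  sumR n (fun x => f (G x)) = sumR n (fun k => f k.+1).
Proof.
move=> [G_range G_inj].
have ltn_coq (i : 'I_n) : (nat_of_ord i < n)%coq_nat by apply/ltP.
have G_bounds (i : 'I_n) : (0 < G i <= n)%N.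
  by have [lo hi] := G_range i (ltn_coq i); apply/andP; split; apply/leP.
have G_pred_ltn (i : 'I_n) : (G i - 1 < n)%N.
  by move/andP: (G_bounds i) => [lo hi]; lia.
pose h (i : 'I_n) := Ordinal (G_pred_ltn i).
have h_inj : injective h.
  move=> i j /(congr1 val) /= eq_ij; apply: val_inj => /=; apply: G_inj; try exact: ltn_coq.
  by move/andP: (G_bounds i) => [? ?]; move/andP: (G_bounds j) => [? ?]; lia.
rewrite !sumR_big [RHS](reindex_inj h_inj) /=.
apply: eq_bigr => i _ /=.
by move/andP: (G_bounds i) => [lo hi]; congr f; lia.
Qed.

End Reindexing.

Lemma sumR_inv_guess_le_1_plus_ln n G :
  (0 < n)%nat -> guessing_function n G ->
  sumR n (fun x => / INR (G x)) <= 1 + ln (INR n).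
Proof.
  intros Hn hG.
  rewrite (Reindexing.sumR_guessing_reindex n G (fun k => / INR k) hG).
  apply harmonic_le_1_plus_ln; lia.
Qed.

Theorem theorem1 (n : nat) (P : nat -> R) (G : nat -> nat) (rho q : R)
  (hP : pmf_pos n P) (hG : guessing_function n G) (hrho : 0 < rho) :
  Eq_norm n P q (fun x => Rpower (INR (G x)) rho) >=
  Rpower (1 + ln (INR n)) (- rho) *
  (Rpower (sumR n (fun x => Rpower (P x) (q / (1 + rho)))) (1 + rho)
   / sumR n (fun x => Rpower (P x) q)).
Proof.
  destruct hP as [P_pos P_sum1].
  assert (Hn : (0 < n)%nat) by (destruct n; [simpl in P_sum1; lra | lia]).
  assert (G_pos : forall x, (x < n)%nat -> 0 < INR (G x))
    by (intros x Hx; apply lt_0_INR, (proj1 hG x Hx)).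
  pose proof (Rpower_sumR_le_moment_harmonic n P (fun x => INR (G x)) rho q
                Hn hrho P_pos G_pos) as Hholder.
  pose proof (sumR_inv_guess_le_1_plus_ln n G Hn hG) as Hharm.
  unfold Eq_norm.
  set (T := sumR n (fun x => Rpower (INR (G x)) rho * Rpower (P x) q)) in *.
  set (A := sumR n (fun x => Rpower (P x) q)).
  set (H := sumR n (fun x => / INR (G x))) in *.
  set (L := 1 + ln (INR n)) in *.
  assert (HA : 0 < A) by (apply sumR_pos; auto; intros; apply exp_pos).
  assert (HT : 0 < T) by (apply sumR_pos; auto; intros; apply Rmult_lt_0_compat; apply exp_pos).
  assert (HH : 0 < H) by (apply sumR_pos; auto; intros; apply Rinv_0_lt_compat; auto).
  assert (HL : Rpower H rho <= Rpower L rho) by (apply Rle_Rpower_l; lra).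
  assert (HLpos : 0 < Rpower L rho) by apply exp_pos.
  rewrite Rpower_Ropp. apply Rle_ge.
  apply Rle_trans with (/ Rpower L rho * (T * Rpower L rho / A)).
  - apply Rmult_le_compat_l; [left; apply Rinv_0_lt_compat; exact HLpos|].
    apply Rmult_le_compat_r; [left; apply Rinv_0_lt_compat; exact HA|].
    eapply Rle_trans; [exact Hholder | apply Rmult_le_compat_l; lra].
  - right; field; lra.
Qed.
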